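(* Let $p_1,\ldots,p_m\in[0,1]$ and $\alpha\in[0,1]$, and let $\mathcal{U}_\alpha$, $\mathcal{X}_\alpha$, $p_{(i:I)}$ and $h_\alpha$ be as in the context. Then for every $I\subseteq\{1,\ldots,m\}$: $I\in\mathcal{X}_\alpha$ if and only if there exists some $1\le i\le |I|$ such that $h_\alpha\, p_{(i:I)}\le i\alpha$.
   Context: Setting: $m$ hypotheses with $p$-values $p_1,\ldots,p_m\in[0,1]$. For $I\subseteq\{1,\ldots,m\}$ and $1\le i\le |I|$, $p_{(i:I)}$ denotes the $i$-th smallest value of the multiset $\{p_j: j\in I\}$. The Simes local test at level $\alpha$ rejects $I$ (written $I\in\mathcal{U}_\alpha$) iff there is $1\le i\le |I|$ with $|I|\,p_{(i:I)}\le i\alpha$ (so $\emptyset\notin\mathcal{U}_\alpha$). Closed testing: $\mathcal{X}_\alpha=\{I\subseteq\{1,\ldots,m\}: J\in\mathcal{U}_\alpha \text{ for all } J\supseteq I,\ J\subseteq\{1,\ldots,m\}\}$. Let $r_1,\ldots,r_m$ be a permutation of $1,\ldots,m$ with $p_{r_1}\le\cdots\le p_{r_m}$, and $K_i=\{r_{m-i+1},\ldots,r_m\}$ (indices of the $i$ largest $p$-values), $i=0,\ldots,m$. Define $h_\alpha=\max\{0\le i\le m: K_i\notin\mathcal{U}_\alpha\}$. *)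

From HB Require Import structures.
From mathcomp Require Import all_boot all_order all_algebra all_fingroup.
Set Implicit Arguments. Unset Strict Implicit. Unset Printing Implicit Defensive.
Import Order.TTheory GRing.Theory Num.Theory.
Local Open Scope ring_scope.

Section Simes.
Variables (R : realFieldType) (m : nat).

(* p_(i:I): the i-th smallest (1-based) of the multiset {p_j : j in I};
   meaningful for 1 <= i <= #|I|. *)
Definition pord (p : 'I_m -> R) (I : {set 'I_m}) (i : nat) : R :=
  nth 0 (sort <=%R [seq p j | j <- enum I]) i.-1.

Definition simes_rej (alpha : R) (p : 'I_m -> R) (I : {set 'I_m}) : bool :=
  [exists i : 'I_#|I|, #|I|%:R * pord p I i.+1 <= (i.+1)%:R * alpha].

Definition closed_rej (alpha : R) (p : 'I_m -> R) (I : {set 'I_m}) : bool :=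
  [forall J : {set 'I_m}, (I \subset J) ==> simes_rej alpha p J].

(* With r a permutation listing indices by nondecreasing p-value
   (0-based: r k is r_{k+1}), K_i = indices of the i largest p-values. *)
Definition Kset (r : {perm 'I_m}) (i : nat) : {set 'I_m} :=
  [set r k | k : 'I_m & m - i <= k]%N.

Definition h_alpha (alpha : R) (p : 'I_m -> R) (r : {perm 'I_m}) : nat :=
  \max_(i < m.+1 | ~~ simes_rej alpha p (Kset r i)) i.

End Simes.

(* Write N_J(x) = #{j in J | p_j <= x}.  The Simes condition "c p_(i:J) <= i alpha
   for some i" is equivalent to "c x <= N_J(x) alpha for some x with N_J(x) > 0"
   (take x = p_(i:J), resp. i = N_J(x)).  Among the sets of size n, K_n has the
   smallest counts N(x).  Hence a superset J of I with |J| > h is rejected because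
   K_|J| is, and one with |J| <= h is rejected as soon as h x <= N_I(x) alpha.
   Conversely, if |I| <= h then some J = I u K_t has exactly h elements; a witness x
   for J either lies above a p-value of K_t, and then N_{K_h}(x) >= N_J(x) would make
   K_h rejected, or it does not, and then N_J(x) = N_I(x). *)

From HB Require Import structures.
From mathcomp Require Import all_boot all_order all_algebra all_fingroup.
From mathcomp Require Import zify.
Import Order.TTheory GRing.Theory Num.Theory.
Set Implicit Arguments. Unset Strict Implicit. Unset Printing Implicit Defensive.
Local Open Scope ring_scope.

Lemma sorted_nth_le_count d (T : porderType d) (x0 x : T) (s : seq T) k :
  sorted <=%O s -> (k < size s)%N ->
  (nth x0 s k <= x)%O = (k < count (<= x)%O s)%N.
Proof.
move=> s_sorted k_lt; set c := count _ s.
have c_le : (c <= size s)%N := count_size _ s.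
have take_le : all (<= x)%O (take c s) by rewrite -sorted_filter_le // filter_all.
have drop_gt : count (<= x)%O (drop c s) = 0%N.
  move: take_le; rewrite all_count size_takel // => /eqP count_take.
  have := count_cat (<= x)%O (take c s) (drop c s).
  rewrite cat_take_drop count_take => /eqP.
  by rewrite -{1}[X in X == _]addn0 eqn_add2l eq_sym => /eqP.
case: (ltnP k c) => [k_lt_c | c_le_k].
- have /(all_nthP x0) := take_le.
  by move=> /(_ k); rewrite size_takel // nth_take //; apply.
- apply/negbTE/negP => le_x.
  suff : (0 < count (<= x)%O (drop c s))%N by rewrite drop_gt.
  rewrite -has_count; apply/hasP; exists (nth x0 s k) => //.
  rewrite -(subnKC c_le_k) -nth_drop mem_nth // size_drop ltn_sub2r //.
  exact: leq_ltn_trans c_le_k k_lt.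
Qed.

Lemma nat_ivt (f : nat -> nat) n k :
  (f 0 <= k <= f n)%N -> (forall t, f t.+1 <= (f t).+1)%N -> exists t, f t = k.
Proof.
move=> /andP [f0_le le_fn] f_step; elim: n le_fn => [|n IHn] le_fn.
  by exists 0%N; apply/eqP; rewrite eqn_leq f0_le le_fn.
have [/IHn //|fn_lt] := leqP k (f n).
by exists n.+1; have := f_step n; lia.
Qed.

Section TopSets.
Variables (m : nat) (r : {perm 'I_m}).

Lemma mem_Kset n z : (z \in Kset r n) = (m - n <= (r^-1)%g z)%N.
Proof. by rewrite -{1}(permKV r z) mem_imset ?inE //; exact: perm_inj. Qed.

Lemma card_Kset n : #|Kset r n| = minn n m.
Proof.
rewrite card_imset; last exact: perm_inj.
rewrite -sum1dep_card.
transitivity (\sum_(m - n <= i < m) 1)%N; first by rewrite big_geq_mkord.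
by rewrite sum_nat_const_nat muln1 minnC minnE.
Qed.

Lemma Kset0 : Kset r 0 = set0.
Proof. by apply/eqP; rewrite -cards_eq0 card_Kset min0n. Qed.

Lemma card_setU_KsetS (I : {set 'I_m}) t :
  (#|I :|: Kset r t.+1| <= (#|I :|: Kset r t|).+1)%N.
Proof.
have K_sub : Kset r t \subset Kset r t.+1.
  by apply/subsetP => z; rewrite !mem_Kset; apply: leq_trans; rewrite leq_sub2l.
have U_sub :
    I :|: Kset r t.+1 \subset (I :|: Kset r t) :|: (Kset r t.+1 :\: Kset r t).
  by apply/subsetP => z; rewrite !inE; case: (z \in I); case: (z \in Kset r t).
rewrite (leq_trans (subset_leq_card U_sub)) // (leq_trans (leq_card_setU _ _)) //.
rewrite cardsD (setIidPr K_sub) !card_Kset; lia.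
Qed.
End TopSets.

Section SimesCounting.
Variables (R : realFieldType) (m : nat) (p : 'I_m -> R) (alpha : R).
Hypothesis alpha_ge0 : 0 <= alpha.

Definition nbelow (J : {set 'I_m}) (x : R) : nat := #|[set j in J | p j <= x]|.

Definition simes_at (c : R) (J : {set 'I_m}) (x : R) : bool :=
  (0 < nbelow J x)%N && (c * x <= (nbelow J x)%:R * alpha).

Lemma exists_pordP (c : R) (J : {set 'I_m}) : 0 <= c ->
  (exists i, [/\ (1 <= i)%N, (i <= #|J|)%N & c * pord p J i <= i%:R * alpha]) <->
  (exists x, simes_at c J x).
Proof.
move=> c_ge0; rewrite /simes_at /pord; set s := sort _ _.
have s_sorted : sorted <=%R s by apply: sort_sorted; exact: le_total.
have size_s : size s = #|J| by rewrite size_sort size_map cardE.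
have count_s x : count (<= x)%O s = nbelow J x.
  rewrite /s (seq.permP (permEl (perm_sort _ _))) count_map -size_filter /nbelow cardE.
  apply/perm_size/uniq_perm => [||j]; first exact/filter_uniq/enum_uniq.
    exact: enum_uniq.
  by rewrite mem_filter !mem_enum !inE andbC.
split => [[i [i_ge1 i_le le_i]] | [x /andP [below_gt0 le_x]]].
- exists (s`_i.-1).
  have : (i.-1 < nbelow J (s`_i.-1))%N.
    by rewrite -count_s -(sorted_nth_le_count 0) // size_s; lia.
  rewrite prednK // => i_le_below; rewrite (leq_trans i_ge1 i_le_below) /=.
  by rewrite (le_trans le_i) // ler_wpM2r // ler_nat.
- have below_le : (nbelow J x <= #|J|)%N by rewrite -count_s -size_s count_size.
  exists (nbelow J x); split => //; apply: le_trans le_x.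
  rewrite ler_wpM2l // (sorted_nth_le_count _ _ s_sorted) ?[count _ s]count_s.
    by rewrite prednK.
  by rewrite size_s; lia.
Qed.

Lemma simes_rejP (J : {set 'I_m}) :
  simes_rej alpha p J <-> exists x, simes_at #|J|%:R J x.
Proof.
rewrite -exists_pordP //; split => [/existsP [i le_i] | [i [i_ge1 i_le le_i]]].
  by exists i.+1; split; rewrite ?ltn_ord.
have i_lt : (i.-1 < #|J|)%N by rewrite prednK.
by apply/existsP; exists (Ordinal i_lt); rewrite /= prednK.
Qed.

Lemma nbelowS (I J : {set 'I_m}) x : I \subset J -> (nbelow I x <= nbelow J x)%N.
Proof. by move=> sIJ; apply/subset_leq_card; rewrite !setIdE setSI. Qed.

Lemma nbelow_le (J J' : {set 'I_m}) x :
  (#|J| <= #|J'|)%N -> [set j in J' | x < p j] \subset J ->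
  (nbelow J x <= nbelow J' x)%N.
Proof.
have nbelowE K : nbelow K x = (#|K| - #|[set j in K | (x < p j)%R]|)%N.
  rewrite -(cardsID [set j | (p j <= x)%R] K) /nbelow setIdE.
  suff -> : K :\: [set j | (p j <= x)%R] = [set j in K | (x < p j)%R] by rewrite addnK.
  by apply/setP => j; rewrite !inE ltNge andbC.
move=> le_card above_sub; rewrite !nbelowE.
suff : (#|[set j in J' | (x < p j)%R]| <= #|[set j in J | (x < p j)%R]|)%N by lia.
apply/subset_leq_card/subsetP => j j_above; rewrite inE (subsetP above_sub) //.
by move: j_above; rewrite inE => /andP [_ ->].
Qed.

Hypothesis p_ge0 : forall j, 0 <= p j.

Lemma simes_at_le c c' J J' x : c' <= c -> (nbelow J x <= nbelow J' x)%N ->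
  simes_at c J x -> simes_at c' J' x.
Proof.
move=> le_c le_below /andP [below_gt0 le_x].
have x_ge0 : 0 <= x.
  by move/card_gt0P: below_gt0 => [j]; rewrite inE => /andP [_ /(le_trans (p_ge0 j))].
rewrite /simes_at (leq_trans below_gt0 le_below) /=.
by rewrite (le_trans (ler_wpM2r x_ge0 le_c)) // (le_trans le_x) // ler_wpM2r // ler_nat.
Qed.

Variable r : {perm 'I_m}.
Hypothesis r_sorted : forall k l : 'I_m, (k <= l)%N -> p (r k) <= p (r l).

Lemma Kset_up n y z : y \in Kset r n -> p y < p z -> z \in Kset r n.
Proof.
rewrite !mem_Kset => y_in; apply: contraTT; rewrite -leNgt -ltnNge => z_out.
by rewrite -(permKV r y) -(permKV r z) r_sorted // ltnW // (leq_trans z_out y_in).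
Qed.

Lemma nbelow_Kset_le (J : {set 'I_m}) x : (nbelow (Kset r #|J|) x <= nbelow J x)%N.
Proof.
have J_le : (#|J| <= m)%N by have := max_card J; rewrite card_ord.
have [-> // | /card_gt0P [y]] := posnP (nbelow (Kset r #|J|) x).
rewrite inE => /andP [y_in py_le]; apply: nbelow_le.
  by rewrite card_Kset (minn_idPl J_le).
by apply/subsetP => z; rewrite inE => /andP [_ /(le_lt_trans py_le)/(Kset_up y_in)].
Qed.

Lemma h_alpha_le : (h_alpha alpha p r <= m)%N.
Proof. by apply/bigmax_leqP => i _; rewrite -ltnS ltn_ord. Qed.

Lemma not_rej_Kset_h_alpha : ~~ simes_rej alpha p (Kset r (h_alpha alpha p r)).
Proof.
apply: (big_ind (fun n => ~~ simes_rej alpha p (Kset r n))) => //.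
- by rewrite Kset0; apply/existsP => [[[i i_lt] _]]; rewrite cards0 in i_lt.
- by move=> a b; rewrite /maxn; case: ltnP.
Qed.

Lemma rej_Kset_gt_h_alpha n :
  (h_alpha alpha p r < n)%N -> (n <= m)%N -> simes_rej alpha p (Kset r n).
Proof.
move=> h_lt n_le; apply: contraTT h_lt => not_rej; rewrite -leqNgt.
exact: (leq_bigmax_cond (Ordinal (n_le : n < m.+1)%N)).
Qed.

Lemma closed_rej_simes_at I :
  closed_rej alpha p I -> exists x, simes_at (h_alpha alpha p r)%:R I x.
Proof.
set h := h_alpha alpha p r => closed_I.
have rej (J : {set 'I_m}) : I \subset J -> exists x, simes_at #|J|%:R J x.
  by move=> sIJ; apply/simes_rejP; exact: (implyP (forallP closed_I J)).
have [h_lt | le_h] := ltnP h #|I|.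
  have [x Ix] := rej I (subxx I).
  by exists x; apply: simes_at_le Ix => //; rewrite ler_nat ltnW.
have [t card_J] : exists t, #|I :|: Kset r t| = h.
  apply: (@nat_ivt _ m); last exact: card_setU_KsetS.
  rewrite Kset0 setU0 le_h (leq_trans h_alpha_le) //.
  by rewrite -{1}(minnn m) -(card_Kset r) subset_leq_card ?subsetUr.
have [x Jx] := rej _ (subsetUl I (Kset r t)); rewrite card_J in Jx.
case: (boolP [exists y in Kset r t, p y <= x]) => [/exists_inP [y y_in py_le] | no_y].
  case/negP: not_rej_Kset_h_alpha; apply/simes_rejP; exists x.
  rewrite card_Kset (minn_idPl h_alpha_le); apply: simes_at_le Jx => //.
  apply: nbelow_le; first by rewrite card_J card_Kset (minn_idPl h_alpha_le).
  apply/subsetP => z; rewrite inE => /andP [_ /(le_lt_trans py_le)/(Kset_up y_in)].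
  by rewrite inE orbC => ->.
exists x; apply: simes_at_le Jx => //; apply/subset_leq_card/subsetP => j.
rewrite !inE => /andP [/orP [j_in | j_in] pj_le]; rewrite pj_le andbT //.
by case/negP: no_y; apply/exists_inP; exists j.
Qed.

Lemma simes_at_closed_rej I :
  (exists x, simes_at (h_alpha alpha p r)%:R I x) -> closed_rej alpha p I.
Proof.
move=> [x Ix]; apply/forallP => J; apply/implyP => sIJ; apply/simes_rejP.
have [le_h | h_lt] := leqP #|J| (h_alpha alpha p r).
  by exists x; apply: simes_at_le Ix; rewrite ?ler_nat // nbelowS.
have J_le : (#|J| <= m)%N by have := max_card J; rewrite card_ord.
have /simes_rejP [y Ky] := rej_Kset_gt_h_alpha h_lt J_le.
rewrite card_Kset (minn_idPl J_le) in Ky.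
by exists y; apply: simes_at_le Ky => //; exact: nbelow_Kset_le.
Qed.

End SimesCounting.

Unset Implicit Arguments.

Theorem lemma2 (R : realFieldType) (m : nat) (p : 'I_m -> R) (alpha : R)
  (r : {perm 'I_m})
  (hp : forall j, 0 <= p j <= 1)
  (halpha : 0 <= alpha <= 1)
  (hr : forall k l : 'I_m, (k <= l)%N -> p (r k) <= p (r l))
  (I : {set 'I_m}) :
  closed_rej alpha p I <->
  (exists i : nat, [/\ (1 <= i)%N, (i <= #|I|)%N &
     (h_alpha alpha p r)%:R * pord p I i <= i%:R * alpha]).
Proof.
have [alpha_ge0 _] := andP halpha.
have p_ge0 j : 0 <= p j by case/andP: (hp j).
have simes_atE := exists_pordP p alpha_ge0 I (ler0n R (h_alpha alpha p r)).
split=> [/(closed_rej_simes_at alpha_ge0 p_ge0 hr)/simes_atE // | /simes_atE].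
exact: simes_at_closed_rej.
Qed.
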